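(* $\operatorname{Sort}\mid_{\mathrm{W}}\operatorname{C}_\mathbb{R}$, i.e. $\operatorname{Sort}\not\le_{\mathrm{W}}\operatorname{C}_\mathbb{R}$ and $\operatorname{C}_\mathbb{R}\not\le_{\mathrm{W}}\operatorname{Sort}$.
   Context: Represented spaces: a representation of a set $X$ is a partial surjection $\delta_X:\subseteq\mathbb{N}^\mathbb{N}\to X$. For a partial multi-valued function $f:\subseteq X\rightrightarrows Y$, a realizer is a partial $F:\subseteq\mathbb{N}^\mathbb{N}\to\mathbb{N}^\mathbb{N}$ with $\delta_Y(F(p))\in f(\delta_X(p))$ for all $p$ with $\delta_X(p)\in\mathrm{dom}(f)$. Weihrauch reducibility: $f\le_{\mathrm{W}} g$ iff there are computable partial $H:\subseteq\mathbb{N}^\mathbb{N}\times\mathbb{N}^\mathbb{N}\to\mathbb{N}^\mathbb{N}$ and $K:\subseteq\mathbb{N}^\mathbb{N}\to\mathbb{N}^\mathbb{N}$ such that $p\mapsto H(p,G(K(p)))$ is a realizer of $f$ for every realizer $G$ of $g$. $\operatorname{Sort}:2^\mathbb{N}\to 2^\mathbb{N}$ is defined by $\operatorname{Sort}(p)=0^n1^\mathbb{N}$ if $p$ contains exactly $n$ occurrences of $0$, and $\operatorname{Sort}(p)=0^\mathbb{N}$ if $p$ contains infinitely many occurrences of $0$. $\mathbb{R}$ carries the Cauchy representation (names are sequences of rationals $(q_i)$ with $|q_i-q_j|\le2^{-i}$ for $j\ge i$, naming their limit). $\mathcal{A}_-(\mathbb{R})$ is the space of closed subsets of $\mathbb{R}$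 with negative information: a name of closed $A$ is an enumeration of rational open intervals whose union is $\mathbb{R}\setminus A$. Closed choice $\operatorname{C}_\mathbb{R}:\subseteq\mathcal{A}_-(\mathbb{R})\rightrightarrows\mathbb{R}$ maps each nonempty closed $A$ to the set $A$ (any element of $A$ is a valid output). *)

From Stdlib Require Import Reals Arith Cantor.
From Stdlib Require Import Rtopology.
Open Scope R_scope.

Definition baire : Type := nat -> nat.

Definition npair (a b : nat) : nat := Cantor.to_nat (a, b).

Inductive prf : Type :=
  | PZero : prf
  | PSucc : prf
  | PFst  : prf
  | PSnd  : prf
  | PComp : prf -> prf -> prf
  | PPair : prf -> prf -> prf
  | PRec  : prf -> prf -> prf
  | PMu   : prf -> prf.

Inductive peval : prf -> nat -> nat -> Prop :=
  | ev_zero x : peval PZero x 0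
  | ev_succ x : peval PSucc x (S x)
  | ev_fst a b : peval PFst (npair a b) a
  | ev_snd a b : peval PSnd (npair a b) b
  | ev_comp f g x y z : peval g x y -> peval f y z -> peval (PComp f g) x z
  | ev_pair f g x y z : peval f x y -> peval g x z -> peval (PPair f g) x (npair y z)
  | ev_rec0 f g x y : peval f x y -> peval (PRec f g) (npair 0 x) y
  | ev_recS f g n x y z :
      peval (PRec f g) (npair n x) y ->
      peval g (npair n (npair y x)) z ->
      peval (PRec f g) (npair (S n) x) z
  | ev_mu f x n :
      peval f (npair n x) 0 ->
      (forall m, (m < n)%nat -> exists v, v <> 0%nat /\ peval f (npair m x) v) ->
      peval (PMu f) x n.

Fixpoint code_list (l : list nat) : nat :=
  match l with
  | nil => 0%nat
  | cons a l' => S (npair a (code_list l'))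
  end.

Fixpoint prefix (p : baire) (k : nat) : list nat :=
  match k with
  | O => nil
  | S k' => app (prefix p k') (cons (p k') nil)
  end.

Definition pfun1 := baire -> baire -> Prop.
Definition pfun2 := baire -> baire -> baire -> Prop.

Definition functional1 (F : pfun1) : Prop :=
  forall p q1 q2, F p q1 -> F p q2 -> q1 = q2.
Definition functional2 (F : pfun2) : Prop :=
  forall p p' q1 q2, F p p' q1 -> F p p' q2 -> q1 = q2.

(** Type-2 computability via (recursive) associates: a partial F is computable
    iff there is a partial recursive e such that, for every p in dom(F) and
    every output position n, e evaluated on (n, p[0..j)) is defined and 0 for
    all j < k and equals F(p)(n)+1 at j = k, for some k.  (A Type-2 machine
    reading successively longer prefixes.) *)
Definition computable1 (F : pfun1) : Prop :=
  exists e : prf, forall p q, F p q -> forall n, exists k,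
    peval e (npair n (code_list (prefix p k))) (S (q n)) /\
    forall j, (j < k)%nat -> peval e (npair n (code_list (prefix p j))) 0%nat.

Definition computable2 (F : pfun2) : Prop :=
  exists e : prf, forall p p' q, F p p' q -> forall n, exists k,
    peval e (npair n (npair (code_list (prefix p k)) (code_list (prefix p' k))))
          (S (q n)) /\
    forall j, (j < k)%nat ->
      peval e (npair n (npair (code_list (prefix p j)) (code_list (prefix p' j)))) 0%nat.

(** * Represented spaces: a carrier with a (partial, surjective) representation,
    given as the relation  delta p x  <->  delta(p) = x. *)
Record repspace : Type := RepSpace {
  carrier :> Type;
  delta : baire -> carrier -> Prop
}.

Record mvfun (X Y : repspace) : Type := MVFun {
  mdom : carrier X -> Prop;
  mval : carrier X -> carrier Y -> Prop
}.
Arguments mdom {X Y}.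
Arguments mval {X Y}.

Definition realizer {X Y : repspace} (f : mvfun X Y) (F : pfun1) : Prop :=
  functional1 F /\
  forall p x, delta X p x -> mdom f x ->
    exists q, F p q /\ exists y, delta Y q y /\ mval f x y.

Definition weihrauch_le {X Y Z W : repspace} (f : mvfun X Y) (g : mvfun Z W) : Prop :=
  exists (H : pfun2) (K : pfun1),
    functional2 H /\ computable2 H /\ functional1 K /\ computable1 K /\
    forall G : pfun1, realizer g G ->
      realizer f (fun p r => exists q s, K p q /\ G q s /\ H p s r).

(** * Cantor space 2^N, as the subspace of Baire space of 0-1 sequences
    (bit true = 1, false = 0) *)
Definition cantor : repspace :=
  RepSpace (nat -> bool) (fun p x => forall n, p n = (if x n then 1%nat else 0%nat)).

Fixpoint zeros_upto (x : nat -> bool) (m : nat) : nat :=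
  match m with
  | O => O
  | S m' => (zeros_upto x m' + (if x m' then 0 else 1))%nat
  end.

Definition exactly_n_zeros (x : nat -> bool) (n : nat) : Prop :=
  exists N, forall m, (N <= m)%nat -> zeros_upto x m = n.

Definition inf_many_zeros (x : nat -> bool) : Prop :=
  forall N, exists m, (N <= m)%nat /\ x m = false.

Definition Sort : mvfun cantor cantor :=
  MVFun cantor cantor (fun _ => True)
    (fun x y =>
       (forall n, exactly_n_zeros x n -> forall k, y k = Nat.leb n k) /\
       (inf_many_zeros x -> forall k, y k = false)).

Definition qdec (n : nat) : R :=
  let (a, b) := Cantor.of_nat n in
  let (c, d) := Cantor.of_nat a in
  (INR c - INR d) / INR (S b).

Definition reals : repspace :=
  RepSpace R (fun p x =>
    (forall i j, (i <= j)%nat -> Rabs (qdec (p i) - qdec (p j)) <= (/ 2) ^ i) /\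
    Un_cv (fun i => qdec (p i)) x).

Definition in_interval (c : nat) (x : R) : Prop :=
  let (a, b) := Cantor.of_nat c in qdec a < x < qdec b.

(** A name p enumerates
    rational open intervals: p n = 0 means "no interval", p n = c+1 lists the
    interval coded by c; the union of the listed intervals is R \ A. *)
Definition closedR : repspace :=
  RepSpace {A : R -> Prop | closed_set A}
    (fun p A => forall x, ~ proj1_sig A x <->
                  exists n c, p n = S c /\ in_interval c x).

Definition C_R : mvfun closedR reals :=
  MVFun closedR reals (fun A => exists x, proj1_sig A x) (fun A x => proj1_sig A x).

From Stdlib Require Import Reals.
From Stdlib Require Import Lia Lra List Cantor Rtopology ZArith.
From Stdlib Require Import Classical ClassicalEpsilon FunctionalExtensionality.
Open Scope R_scope.
Import ListNotations.

(* Both directions rest on the continuity of computable maps on Baire space.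

   C_R is not reducible to Sort: a name of a Sort output is one of the countably
   many sequences [sort_name s].  For each of them the outer reduction would
   produce, after reading finitely much of the input, a [2^-(3s+4)]-approximation
   of the chosen point.  Diagonalizing, the input enumerates (reading its own
   prefix) the ball of radius [2^-(3s+3)] around that approximation.  These balls
   are narrower than [3^-(s+1)], so a nested-thirds construction keeps the
   remaining closed set nonempty, and the point produced lies in a removed ball.

   Sort is not reducible to C_R: since closed choice may return any name of any
   point, by compactness of [[-j, j]] (Bolzano-Weierstrass) and continuity an
   input with exactly [j] zeros has a finite prefix after which every point of
   modulus at most [j] yields an output with [1] at position [j].  Adding zeros
   beyond these moduli one at a time, the limit has infinitely many zeros, yet
   a point of its set yields a [1] where [Sort] outputs [0^N]. *)

Lemma npair_inj a b c d : npair a b = npair c d -> a = c /\ b = d.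
Proof.
  unfold npair; intro H.
  assert (E := f_equal Cantor.of_nat H). rewrite !cancel_of_to in E.
  inversion E; auto.
Qed.

Ltac npair_inj_all := repeat match goal with H : npair _ _ = npair _ _ |- _ =>
  apply npair_inj in H; destruct H; subst end.

(* The generated principle [peval_ind] gives no induction hypothesis for the
   side condition of [ev_mu], whose subderivations sit under an existential. *)
Section PevalStrongInd.
Variable P : prf -> nat -> nat -> Prop.
Hypothesis Hzero : forall x, P PZero x 0.
Hypothesis Hsucc : forall x, P PSucc x (S x).
Hypothesis Hfst : forall a b, P PFst (npair a b) a.
Hypothesis Hsnd : forall a b, P PSnd (npair a b) b.
Hypothesis Hcomp : forall f g x y z,
  peval g x y -> P g x y -> peval f y z -> P f y z -> P (PComp f g) x z.
Hypothesis Hpair : forall f g x y z,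
  peval f x y -> P f x y -> peval g x z -> P g x z -> P (PPair f g) x (npair y z).
Hypothesis Hrec0 : forall f g x y, peval f x y -> P f x y -> P (PRec f g) (npair 0 x) y.
Hypothesis HrecS : forall f g n x y z,
  peval (PRec f g) (npair n x) y -> P (PRec f g) (npair n x) y ->
  peval g (npair n (npair y x)) z -> P g (npair n (npair y x)) z ->
  P (PRec f g) (npair (S n) x) z.
Hypothesis Hmu : forall f x n, peval f (npair n x) 0 -> P f (npair n x) 0 ->
  (forall m, (m < n)%nat -> exists v, v <> 0%nat /\ peval f (npair m x) v /\ P f (npair m x) v) ->
  P (PMu f) x n.

Fixpoint peval_strong_ind f x y (D : peval f x y) {struct D} : P f x y :=
  match D in peval f x y return P f x y with
  | ev_zero x => Hzero x
  | ev_succ x => Hsucc x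
  | ev_fst a b => Hfst a b
  | ev_snd a b => Hsnd a b
  | ev_comp f g x y z D1 D2 =>
      Hcomp f g x y z D1 (peval_strong_ind _ _ _ D1) D2 (peval_strong_ind _ _ _ D2)
  | ev_pair f g x y z D1 D2 =>
      Hpair f g x y z D1 (peval_strong_ind _ _ _ D1) D2 (peval_strong_ind _ _ _ D2)
  | ev_rec0 f g x y D1 => Hrec0 f g x y D1 (peval_strong_ind _ _ _ D1)
  | ev_recS f g n x y z D1 D2 =>
      HrecS f g n x y z D1 (peval_strong_ind _ _ _ D1) D2 (peval_strong_ind _ _ _ D2)
  | ev_mu f x n D1 Hs => Hmu f x n D1 (peval_strong_ind _ _ _ D1)
      (fun m Hm => match Hs m Hm with
                   | ex_intro _ v (conj h1 h2) =>
                       ex_intro _ v (conj h1 (conj h2 (peval_strong_ind _ _ _ h2)))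
                   end)
  end.
End PevalStrongInd.

Lemma peval_functional f x y1 y2 : peval f x y1 -> peval f x y2 -> y1 = y2.
Proof.
  intros D; revert y2.
  induction D as [| | | |f g x y z D1 IH1 D2 IH2|f g x y z D1 IH1 D2 IH2
                 |f g x y D1 IH1|f g n x y z D1 IH1 D2 IH2|f x n D IH Hbelow] using peval_strong_ind;
    intros y2 E; inversion E; subst; npair_inj_all; try discriminate; auto.
  - match goal with H1 : peval g x ?w, H2 : peval f ?w y2 |- _ =>
      apply IH2; rewrite (IH1 _ H1); exact H2 end.
  - match goal with Hn : S _ = S n |- _ => injection Hn as -> end.
    match goal with H1 : peval (PRec f g) _ ?w, H2 : peval g (npair _ (npair ?w x)) y2 |- _ =>
      apply IH2; rewrite (IH1 _ H1); exact H2 end.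
  - match goal with H0 : peval f (npair y2 x) 0, Hb : forall m, (m < y2)%nat -> _ |- _ =>
      rename H0 into D2, Hb into Hbelow2 end.
    destruct (Nat.lt_trichotomy n y2) as [Hl|[Hl|Hl]]; auto.
    + destruct (Hbelow2 _ Hl) as [v [Hv Dv]]. exfalso; apply Hv, eq_sym, (IH _ Dv).
    + destruct (Hbelow _ Hl) as [v [Hv [_ IHv]]]. exfalso; apply Hv, (IHv _ D2).
Qed.

Definition first_success (P : nat -> nat -> Prop) (k v : nat) : Prop :=
  P k (S v) /\ forall j, (j < k)%nat -> P j 0%nat.

Lemma first_success_unique (P : nat -> nat -> Prop) k1 v1 k2 v2 :
  (forall k w1 w2, P k w1 -> P k w2 -> w1 = w2) ->
  first_success P k1 v1 -> first_success P k2 v2 -> k1 = k2 /\ v1 = v2.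
Proof.
  intros Hfun [H1 H1'] [H2 H2'].
  destruct (Nat.lt_trichotomy k1 k2) as [Hl|[->|Hl]].
  - specialize (Hfun _ _ _ H1 (H2' _ Hl)); discriminate.
  - split; auto. specialize (Hfun _ _ _ H1 H2); congruence.
  - specialize (Hfun _ _ _ H2 (H1' _ Hl)); discriminate.
Qed.

Lemma first_success_transfer (P P' : nat -> nat -> Prop) k v k' v' :
  (forall k w1 w2, P' k w1 -> P' k w2 -> w1 = w2) ->
  (forall j w, (j <= k)%nat -> P j w -> P' j w) ->
  first_success P k v -> first_success P' k' v' -> v' = v.
Proof.
  intros Hfun Hsub [Hk Hbelow] Hs'.
  refine (proj2 (first_success_unique P' k' v' k v Hfun Hs' _)).
  split; [apply Hsub; auto|intros j Hj; apply Hsub, Hbelow; lia].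
Qed.

Lemma prefix_ext (p p' : baire) k :
  (forall i, (i < k)%nat -> p i = p' i) -> prefix p k = prefix p' k.
Proof.
  induction k; intros H; simpl; auto.
  rewrite IHk by (intros; apply H; lia). rewrite H by lia. auto.
Qed.

Lemma computable1_continuous (K : pfun1) : computable1 K ->
  forall p r n, K p r -> exists k, forall p2 r2, K p2 r2 ->
    (forall i, (i < k)%nat -> p2 i = p i) -> r2 n = r n.
Proof.
  intros [e He] p r n Hr. destruct (He _ _ Hr n) as [k Hk].
  exists k. intros p2 r2 Hr2 Hagree. destruct (He _ _ Hr2 n) as [k2 Hk2].
  apply (first_success_transfer
           (fun j w => peval e (npair n (code_list (prefix p j))) w)
           (fun j w => peval e (npair n (code_list (prefix p2 j))) w) k (r n) k2 (r2 n));
    auto.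
  - intros ? ? ?; apply peval_functional.
  - intros j w Hj. rewrite (prefix_ext p2 p j); auto. intros; apply Hagree; lia.
Qed.

Lemma computable2_continuous (H : pfun2) : computable2 H ->
  forall p s r n, H p s r -> exists k, forall p2 s2 r2, H p2 s2 r2 ->
    (forall i, (i < k)%nat -> p2 i = p i) -> (forall i, (i < k)%nat -> s2 i = s i) ->
    r2 n = r n.
Proof.
  intros [e He] p s r n Hr. destruct (He _ _ _ Hr n) as [k Hk].
  exists k. intros p2 s2 r2 Hr2 Hp Hs. destruct (He _ _ _ Hr2 n) as [k2 Hk2].
  apply (first_success_transfer
    (fun j w => peval e (npair n (npair (code_list (prefix p j)) (code_list (prefix s j)))) w)
    (fun j w => peval e (npair n (npair (code_list (prefix p2 j)) (code_list (prefix s2 j)))) w)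
    k (r n) k2 (r2 n)); auto.
  - intros ? ? ?; apply peval_functional.
  - intros j w Hj. rewrite (prefix_ext p2 p j), (prefix_ext s2 s j); auto;
      intros; [apply Hs|apply Hp]; lia.
Qed.

Lemma half_pow_pos n : 0 < (/2)^n.
Proof. apply pow_lt; lra. Qed.

Lemma half_pow_le i k : (i <= k)%nat -> (/2)^k <= (/2)^i.
Proof.
  intros H. rewrite !pow_inv. apply Rinv_le_contravar.
  - apply pow_lt; lra.
  - apply Rle_pow; lra || auto.
Qed.

Lemma half_pow_S n : (/2)^(S n) = /2 * (/2)^n.
Proof. reflexivity. Qed.

Lemma half_pow_small eps : 0 < eps -> exists N, (/2)^N < eps.
Proof.
  intros He. destruct (pow_lt_1_zero (/2) ltac:(rewrite Rabs_right; lra) eps He) as [N HN].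
  exists N. specialize (HN N (le_n _)). rewrite Rabs_right in HN; auto.
  left; apply half_pow_pos.
Qed.

Lemma qdec_to_nat c d b :
  qdec (Cantor.to_nat (Cantor.to_nat (c, d), b)) = (INR c - INR d) / INR (S b).
Proof. unfold qdec. rewrite !cancel_of_to. auto. Qed.

Lemma dyadic_approx z n : exists c, Rabs (qdec c - z) <= (/2)^n.
Proof.
  set (D := Nat.pow 2 n).
  assert (HD : (0 < D)%nat) by (unfold D; apply Nat.neq_0_lt_0, Nat.pow_nonzero; lia).
  assert (HDR : INR D = 2 ^ n) by (unfold D; rewrite pow_INR; simpl; f_equal; ring).
  set (m := (up (z * INR D) - 1)%Z).
  exists (Cantor.to_nat (Cantor.to_nat (Z.to_nat m, Z.to_nat (- m)), (D - 1)%nat)).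
  assert (Hq : qdec (Cantor.to_nat (Cantor.to_nat (Z.to_nat m, Z.to_nat (- m)), (D - 1)%nat))
               = IZR m / INR D).
  { rewrite qdec_to_nat. replace (S (D - 1)) with D by lia. f_equal.
    rewrite !INR_IZR_INZ, <- minus_IZR. f_equal. lia. }
  rewrite Hq. destruct (archimed (z * INR D)) as [A1 A2].
  assert (Hm : IZR m = IZR (up (z * INR D)) - 1) by (unfold m; rewrite minus_IZR; auto).
  assert (P : 0 < INR D) by (apply lt_0_INR; auto).
  rewrite pow_inv, <- HDR. apply Rabs_le. split;
    apply (Rmult_le_reg_r (INR D)); auto; field_simplify; lra.
Qed.

Lemma delta_reals_approx r z : delta reals r z -> forall i, Rabs (qdec (r i) - z) <= (/2)^i.
Proof.
  intros [Hc Hl] i.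
  apply Rnot_lt_le; intro Hgt.
  destruct (Hl (Rabs (qdec (r i) - z) - (/2)^i) ltac:(lra)) as [N HN].
  set (j := Nat.max N i).
  specialize (HN j ltac:(lia)). specialize (Hc i j ltac:(lia)).
  pose proof (Rdist_tri (qdec (r i)) z (qdec (r j))). unfold Rdist in *.
  lra.
Qed.

Lemma delta_reals_of_approx r z :
  (forall i, Rabs (qdec (r i) - z) <= (/2)^(S i)) -> delta reals r z.
Proof.
  intros Happrox. split.
  - intros i j Hij.
    pose proof (Rdist_tri (qdec (r i)) (qdec (r j)) z). unfold Rdist in *.
    rewrite (Rabs_minus_sym z) in *.
    pose proof (Happrox i). pose proof (Happrox j).
    pose proof (half_pow_le (S i) (S j) ltac:(lia)). pose proof (half_pow_S i). lra.
  - intros eps He. destruct (half_pow_small eps He) as [N HN]. exists N. intros n Hn.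
    unfold Rdist. eapply Rle_lt_trans; [apply Happrox|].
    eapply Rle_lt_trans; [apply half_pow_le|exact HN]. lia.
Qed.

(* Precision [2^-(i+2)] leaves room to splice in a nearby point (see [splice_delta]). *)
Definition cauchy_name (z : R) : baire :=
  fun i => proj1_sig (constructive_indefinite_description _ (dyadic_approx z (S (S i)))).

Lemma cauchy_name_spec z i : Rabs (qdec (cauchy_name z i) - z) <= (/2)^(S (S i)).
Proof. unfold cauchy_name. destruct (constructive_indefinite_description _ _); auto. Qed.

Lemma cauchy_name_delta z : delta reals (cauchy_name z) z.
Proof.
  apply delta_reals_of_approx. intros i. eapply Rle_trans; [apply cauchy_name_spec|].
  apply half_pow_le; lia.
Qed.

Definition splice (r r' : baire) (k : nat) : baire :=
  fun i => if Nat.ltb i k then r i else r' i.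

Lemma splice_delta z z' k : Rabs (z' - z) <= (/2)^(S k) ->
  delta reals (splice (cauchy_name z) (cauchy_name z') k) z'.
Proof.
  intros Hz. apply delta_reals_of_approx. intros i. unfold splice.
  destruct (Nat.ltb_spec i k).
  - pose proof (Rdist_tri (qdec (cauchy_name z i)) z' z). unfold Rdist in *.
    rewrite (Rabs_minus_sym z') in *. pose proof (cauchy_name_spec z i).
    pose proof (half_pow_le (S (S i)) (S k) ltac:(lia)). rewrite (half_pow_S (S i)) in *. lra.
  - eapply Rle_trans; [apply cauchy_name_spec|]. apply half_pow_le; lia.
Qed.

Definition avoids (q : baire) (y : R) : Prop :=
  ~ exists n c, q n = S c /\ in_interval c y.

Lemma in_interval_nbhd c y : in_interval c y -> neighbourhood (in_interval c) y.
Proof.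
  unfold in_interval. destruct (Cantor.of_nat c) as [a b]. intros Hy.
  assert (Hp : 0 < Rmin (y - qdec a) (qdec b - y)) by (apply Rmin_glb_lt; lra).
  exists (mkposreal _ Hp). intros y' Hy'. unfold disc in Hy'; simpl in Hy'.
  pose proof (Rmin_l (y - qdec a) (qdec b - y)). pose proof (Rmin_r (y - qdec a) (qdec b - y)).
  apply Rabs_def2 in Hy'. lra.
Qed.

Lemma avoids_closed q : closed_set (avoids q).
Proof.
  intros y Hy. apply NNPP in Hy. destruct Hy as [n [c [Hq Hc]]].
  destruct (in_interval_nbhd c y Hc) as [d Hd].
  exists d. intros y' Hy' Hav. apply Hav. exists n, c. auto.
Qed.

Definition closed_of_enum q : {A : R -> Prop | closed_set A} :=
  exist _ (avoids q) (avoids_closed q).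

Lemma closed_of_enum_delta q : delta closedR q (closed_of_enum q).
Proof. intro x; simpl; split; [apply NNPP | intros H H'; apply H'; exact H]. Qed.

Lemma delta_closedR_avoids q A : delta closedR q A -> forall y, proj1_sig A y <-> avoids q y.
Proof.
  intros H y. specialize (H y). unfold avoids. split.
  - intros Hy H'. apply H in H'. auto.
  - intros Hy. apply NNPP. intros Hn. apply Hy. apply H; auto.
Qed.

Lemma avoids_empty_enum y : avoids (fun _ => 0%nat) y.
Proof. intros [n [c [E _]]]; discriminate. Qed.

Lemma exactly_n_zeros_unique x n1 n2 :
  exactly_n_zeros x n1 -> exactly_n_zeros x n2 -> n1 = n2.
Proof.
  intros [N1 H1] [N2 H2]. rewrite <- (H1 (Nat.max N1 N2)), <- (H2 (Nat.max N1 N2)); lia.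
Qed.

Lemma exactly_n_zeros_not_inf x n : exactly_n_zeros x n -> ~ inf_many_zeros x.
Proof.
  intros [N H] Hinf. destruct (Hinf N) as [m [Hm Hx]].
  pose proof (H m Hm) as E1. pose proof (H (S m) ltac:(lia)) as E2.
  simpl in E2. rewrite Hx in E2. lia.
Qed.

Lemma zeros_upto_ext x x' m :
  (forall n, (n < m)%nat -> x n = x' n) -> zeros_upto x m = zeros_upto x' m.
Proof.
  induction m; intros Ha; simpl; auto.
  rewrite IHm by (intros; apply Ha; lia). rewrite Ha by lia. auto.
Qed.

Lemma zeros_upto_ones_tail x N : (forall n, (N <= n)%nat -> x n = true) ->
  forall m, (N <= m)%nat -> zeros_upto x m = zeros_upto x N.
Proof.
  intros H m Hm. replace m with (N + (m - N))%nat by lia.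
  induction (m - N)%nat as [|d IH]; [rewrite Nat.add_0_r; auto|].
  rewrite Nat.add_succ_r; simpl. rewrite H by lia. lia.
Qed.

Lemma exactly_n_zeros_of_ones_tail x N : (forall n, (N <= n)%nat -> x n = true) ->
  exactly_n_zeros x (zeros_upto x N).
Proof. intros H. exists N. apply zeros_upto_ones_tail; auto. Qed.

Lemma inf_many_zeros_of_not_exactly x : ~ (exists n, exactly_n_zeros x n) -> inf_many_zeros x.
Proof.
  intros H N. apply NNPP. intros Hn. apply H. exists (zeros_upto x N).
  apply exactly_n_zeros_of_ones_tail. intros n Hn'.
  destruct (x n) eqn:E; auto. exfalso; apply Hn; exists n; auto.
Qed.

Lemma Sort_exactly x j z : exactly_n_zeros x j -> mval Sort x z -> z j = true.
Proof. intros H [Hz _]. rewrite (Hz j H j). apply Nat.leb_refl. Qed.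

Lemma Sort_inf x j z : inf_many_zeros x -> mval Sort x z -> z j = false.
Proof. intros H [_ Hz]. apply Hz; auto. Qed.

Lemma delta_cantor_unique q x1 x2 : delta cantor q x1 -> delta cantor q x2 -> x1 = x2.
Proof.
  intros H1 H2. apply functional_extensionality. intros n. specialize (H1 n); specialize (H2 n).
  rewrite H1 in H2. destruct (x1 n), (x2 n); auto; discriminate.
Qed.

(* [sort_name (S n)] names [0^n 1^N] and [sort_name 0] names [0^N]: these are
   all the names of outputs of [Sort]. *)
Definition sort_name (s : nat) : baire :=
  match s with
  | 0%nat => fun _ => 0%nat
  | S n => fun k => if Nat.leb n k then 1%nat else 0%nat
  end.

Definition sort_realizer : pfun1 := fun q s => exists x, delta cantor q x /\
  ((exists n, exactly_n_zeros x n /\ s = sort_name (S n)) \/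
   (inf_many_zeros x /\ s = sort_name 0)).

Lemma sort_realizer_spec : realizer Sort sort_realizer.
Proof.
  split.
  - intros q s1 s2 [x1 [Hx1 C1]] [x2 [Hx2 C2]].
    rewrite <- (delta_cantor_unique _ _ _ Hx1 Hx2) in C2.
    destruct C1 as [[n1 [E1 ->]]|[I1 ->]]; destruct C2 as [[n2 [E2 ->]]|[I2 ->]]; auto.
    + rewrite (exactly_n_zeros_unique _ _ _ E1 E2); auto.
    + exfalso; eapply exactly_n_zeros_not_inf; eauto.
    + exfalso; eapply exactly_n_zeros_not_inf; eauto.
  - intros p x Hp _. destruct (classic (exists n, exactly_n_zeros x n)) as [[n Hn]|Hn].
    + exists (sort_name (S n)). split; [exists x; split; eauto|].
      exists (fun k => Nat.leb n k). split; [intro k; simpl; auto|split].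
      * intros n' Hn' k. rewrite (exactly_n_zeros_unique _ _ _ Hn Hn'); auto.
      * intros Hi; exfalso; eapply exactly_n_zeros_not_inf; eauto.
    + exists (sort_name 0).
      split; [exists x; split; auto; right; split; auto; apply inf_many_zeros_of_not_exactly; auto|].
      exists (fun _ => false). split; [intro k; simpl; auto|split; auto].
      intros n' Hn'; exfalso; apply Hn; eauto.
Qed.

Definition ball_code (M v : nat) : nat :=
  let (a, b) := Cantor.of_nat v in let (c, d) := Cantor.of_nat a in
  Cantor.to_nat (Cantor.to_nat (Cantor.to_nat (c * M, d * M + S b), (S b * M - 1)),
                 Cantor.to_nat (Cantor.to_nat (c * M + S b, d * M), (S b * M - 1)))%nat.

Lemma in_ball_code M v x : (0 < M)%nat ->
  in_interval (ball_code M v) x <-> qdec v - / INR M < x < qdec v + / INR M.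
Proof.
  intros HM0. unfold in_interval, ball_code.
  destruct (Cantor.of_nat v) as [a b] eqn:Ev. destruct (Cantor.of_nat a) as [c d] eqn:Ea.
  assert (Hq : qdec v = (INR c - INR d) / INR (S b)) by (unfold qdec; rewrite Ev, Ea; auto).
  rewrite Hq, cancel_of_to, !qdec_to_nat.
  replace (S (S b * M - 1)) with (S b * M)%nat by lia.
  assert (HM : 0 < INR M) by (apply lt_0_INR; auto).
  assert (Hb : 0 < INR (S b)) by (apply lt_0_INR; lia).
  replace ((INR (c * M) - INR (d * M + S b)) / INR (S b * M))
    with ((INR c - INR d) / INR (S b) - / INR M)
    by (repeat (rewrite mult_INR || rewrite plus_INR); field; split; lra).
  replace ((INR (c * M + S b) - INR (d * M)) / INR (S b * M))
    with ((INR c - INR d) / INR (S b) + / INR M)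
    by (repeat (rewrite mult_INR || rewrite plus_INR); field; split; lra).
  tauto.
Qed.

Definition stage_scale (s : nat) : nat := Nat.pow 2 (3 * s + 3).

Lemma in_stage_ball s v x :
  in_interval (ball_code (stage_scale s) v) x <-> Rabs (x - qdec v) < (/2)^(3 * s + 3).
Proof.
  assert (HM : INR (stage_scale s) = / (/2)^(3 * s + 3)).
  { unfold stage_scale. rewrite pow_INR, pow_inv, Rinv_inv. reflexivity. }
  rewrite in_ball_code by (apply Nat.neq_0_lt_0, Nat.pow_nonzero; lia).
  rewrite HM, Rinv_inv. split; intros H; [apply Rabs_def1|apply Rabs_def2 in H]; lra.
Qed.

Lemma length_prefix p t : length (prefix p t) = t.
Proof. induction t; simpl; auto. rewrite length_app, IHt; simpl; lia. Qed.

Lemma firstn_prefix p k t : (k <= t)%nat -> firstn k (prefix p t) = prefix p k.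
Proof.
  induction t; intros H.
  - replace k with 0%nat by lia; auto.
  - destruct (Nat.eq_dec k (S t)) as [->|Hn].
    + apply firstn_all2. rewrite length_prefix; auto.
    + simpl. rewrite firstn_app, length_prefix. replace (k - t)%nat with 0%nat by lia.
      simpl. rewrite app_nil_r. apply IHt; lia.
Qed.

Section Diagonal.
Variable e : prf.

Definition run_on_list (s : nat) (l : list nat) (k v : nat) : Prop :=
  peval e (npair (3 * s + 4)
    (npair (code_list (firstn k l)) (code_list (prefix (sort_name s) k)))) v.

Definition stage (t : nat) : nat := fst (Cantor.of_nat t).

(* At time [t], with [s := stage t], list the ball of radius [2^-(3s+3)] around
   the [2^-(3s+4)]-approximation that [e] computes from the enumeration built so
   far and the Sort answer [sort_name s], once that computation has halted. *)
Definition diag_step (l : list nat) : nat :=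
  match excluded_middle_informative
    (exists v k, (k <= length l)%nat /\ first_success (run_on_list (stage (length l)) l) k v) with
  | left h =>
      S (ball_code (stage_scale (stage (length l)))
                   (proj1_sig (constructive_indefinite_description _ h)))
  | right _ => 0%nat
  end.

Fixpoint diag_prefix (t : nat) : list nat :=
  match t with
  | 0%nat => nil
  | S t => diag_prefix t ++ [diag_step (diag_prefix t)]
  end.

Definition diag_enum : baire := fun t => diag_step (diag_prefix t).

Lemma diag_prefix_eq t : diag_prefix t = prefix diag_enum t.
Proof. induction t; simpl; auto. rewrite <- IHt. auto. Qed.

Definition diag_run (s k v : nat) : Prop :=
  peval e (npair (3 * s + 4)
    (npair (code_list (prefix diag_enum k)) (code_list (prefix (sort_name s) k)))) v.

Lemma first_success_run_on_list s t k v : (k <= t)%nat ->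
  first_success (run_on_list s (diag_prefix t)) k v <-> first_success (diag_run s) k v.
Proof.
  intros Hk. assert (E : forall j w, (j <= t)%nat ->
    run_on_list s (diag_prefix t) j w <-> diag_run s j w).
  { intros j w Hj. unfold run_on_list, diag_run.
    rewrite diag_prefix_eq, firstn_prefix by auto. tauto. }
  unfold first_success. rewrite E by auto.
  split; intros [A B]; split; auto; intros j Hj; apply E, B; lia.
Qed.

Lemma diag_run_unique s k1 v1 k2 v2 :
  first_success (diag_run s) k1 v1 -> first_success (diag_run s) k2 v2 -> v1 = v2.
Proof.
  intros H1 H2. refine (proj2 (first_success_unique _ _ _ _ _ _ H1 H2)).
  intros ? ? ?; apply peval_functional.
Qed.

Lemma diag_enum_listed t c : diag_enum t = S c ->
  exists s v k, c = ball_code (stage_scale s) v /\ first_success (diag_run s) k v.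
Proof.
  unfold diag_enum, diag_step. rewrite diag_prefix_eq, length_prefix, <- diag_prefix_eq.
  destruct (excluded_middle_informative _) as [h|]; [|discriminate].
  destruct (constructive_indefinite_description _ h) as [v [k [Hk Hs]]]; simpl.
  intros E; injection E as <-.
  exists (stage t), v, k. split; auto. apply first_success_run_on_list in Hs; auto.
Qed.

Lemma diag_enum_lists s k v : first_success (diag_run s) k v ->
  diag_enum (Cantor.to_nat (s, k)) = S (ball_code (stage_scale s) v).
Proof.
  intros Hs. set (t := Cantor.to_nat (s, k)).
  assert (Hkt : (k <= t)%nat) by (unfold t; pose proof (to_nat_non_decreasing s k); lia).
  assert (Hst : stage t = s) by (unfold stage, t; rewrite cancel_of_to; auto).
  unfold diag_enum, diag_step. rewrite diag_prefix_eq, length_prefix, <- diag_prefix_eq, Hst.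
  destruct (excluded_middle_informative _) as [h|Hn].
  - destruct (constructive_indefinite_description _ h) as [v' [k' [Hk' Hs']]]; simpl.
    apply first_success_run_on_list in Hs'; auto. rewrite (diag_run_unique _ _ _ _ _ Hs' Hs). auto.
  - exfalso. apply Hn. exists v, k. split; auto. apply first_success_run_on_list; auto.
Qed.

Definition hits_stage_ball (s : nat) (a b : R) : Prop :=
  exists v k w, first_success (diag_run s) k v /\ a <= w <= b /\
    Rabs (w - qdec v) < (/2)^(3 * s + 3).

(* Left ends of nested intervals [[a_s, a_s + 3^-s]]: keep the left third unless
   the ball of stage [s] meets it, in which case the right third misses it. *)
Fixpoint nested_left (s : nat) : R :=
  match s with
  | 0%nat => 0
  | S s' => nested_left s' +
      (if excluded_middle_informative
            (hits_stage_ball s' (nested_left s') (nested_left s' + (/3)^(S s')))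
       then 2 * (/3)^(S s') else 0)
  end.

Lemma third_pow_pos n : 0 < (/3)^n.
Proof. apply pow_lt; lra. Qed.

Lemma nested_left_bounds s d :
  nested_left s <= nested_left (s + d) <= nested_left s + (/3)^s - (/3)^(s + d).
Proof.
  induction d.
  - rewrite Nat.add_0_r; lra.
  - rewrite Nat.add_succ_r. simpl nested_left. simpl pow.
    pose proof (third_pow_pos (s + d)).
    destruct (excluded_middle_informative _); lra.
Qed.

Definition nested_lefts (z : R) : Prop := exists n, z = nested_left n.

Lemma nested_lefts_bound : bound nested_lefts.
Proof.
  exists 1. intros z [n ->]. pose proof (nested_left_bounds 0 n) as Hb. simpl in Hb.
  pose proof (third_pow_pos n). lra.
Qed.

Definition diag_point : R :=
  proj1_sig (completeness nested_lefts nested_lefts_bound (ex_intro _ 0 (ex_intro _ 0%nat eq_refl))).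

Lemma diag_point_bounds s : nested_left s <= diag_point <= nested_left s + (/3)^s.
Proof.
  unfold diag_point. destruct (completeness _ _ _) as [m [Hub Hlub]]; simpl. split.
  - apply Hub. exists s; auto.
  - apply Hlub. intros z [n ->]. destruct (le_lt_dec s n).
    + replace n with (s + (n - s))%nat by lia. pose proof (nested_left_bounds s (n - s)).
      pose proof (third_pow_pos (s + (n - s))). lra.
    + pose proof (nested_left_bounds n (s - n)) as Hb.
      replace (n + (s - n))%nat with s in Hb by lia. pose proof (third_pow_pos s). lra.
Qed.

Lemma stage_ball_lt_third s : 2 * (/2)^(3 * s + 3) <= (/3)^(S s).
Proof.
  replace (3 * s + 3)%nat with (3 * S s)%nat by lia. rewrite pow_mult.
  replace ((/2)^3) with (/8) by (simpl; field).
  simpl. assert ((/8)^s <= (/3)^s) by (apply pow_incr; lra). pose proof (third_pow_pos s). lra.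
Qed.

Lemma diag_point_avoids : avoids diag_enum diag_point.
Proof.
  intros [n [c [Hn Hc]]]. destruct (diag_enum_listed _ _ Hn) as [s [v [k [-> Hs]]]].
  apply in_stage_ball, Rabs_def2 in Hc.
  pose proof (diag_point_bounds (S s)) as Hb. simpl nested_left in Hb.
  pose proof (stage_ball_lt_third s). pose proof (third_pow_pos (S s)).
  assert (E3 : (/3)^(S s) = /3 * (/3)^s) by reflexivity. rewrite E3 in *.
  destruct (excluded_middle_informative _) as [Hhit|Hmiss].
  - destruct Hhit as [v' [k' [w [Hs' [Hw Hwv]]]]].
    rewrite (diag_run_unique _ _ _ _ _ Hs' Hs) in Hwv. apply Rabs_def2 in Hwv. lra.
  - apply Hmiss. exists v, k, diag_point. split; auto. split; [lra|]. apply Rabs_def1; lra.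
Qed.

End Diagonal.

Lemma not_C_R_le_Sort : ~ weihrauch_le C_R Sort.
Proof.
  intros [H [K [_ [[e He] [_ [_ Hred]]]]]].
  destruct (Hred sort_realizer sort_realizer_spec) as [_ Hred'].
  destruct (Hred' (diag_enum e) (closed_of_enum (diag_enum e)) (closed_of_enum_delta _)
              (ex_intro _ (diag_point e) (diag_point_avoids e)))
    as [r [[q [s' [_ [Hsort HH]]]] [x [Hx Hxin]]]].
  assert (Hs : exists s, s' = sort_name s)
    by (destruct Hsort as [x' [_ [[n [_ ->]]|[_ ->]]]]; eauto).
  destruct Hs as [s ->].
  destruct (He _ _ _ HH (3 * s + 4)%nat) as [k Hk].
  apply Hxin. exists (Cantor.to_nat (s, k)), (ball_code (stage_scale s) (r (3 * s + 4)%nat)).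
  split; [apply diag_enum_lists, Hk|].
  apply in_stage_ball.
  pose proof (delta_reals_approx _ _ Hx (3 * s + 4)%nat) as Happrox.
  rewrite Rabs_minus_sym. eapply Rle_lt_trans; [exact Happrox|].
  replace (3 * s + 4)%nat with (S (3 * s + 3)) by lia.
  rewrite half_pow_S. pose proof (half_pow_pos (3 * s + 3)). lra.
Qed.

Definition names_nonempty (q : baire) : Prop := exists y, avoids q y.

Definition avoided_point (q : baire) : R :=
  match excluded_middle_informative (names_nonempty q) with
  | left h => proj1_sig (constructive_indefinite_description _ h)
  | right _ => 0
  end.

Lemma avoided_point_spec q : names_nonempty q -> avoids q (avoided_point q).
Proof.
  intros h. unfold avoided_point. destruct (excluded_middle_informative _); [|contradiction].
  destruct (constructive_indefinite_description _ _); auto.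
Qed.

(* A realizer of closed choice that answers [r0] on the set name [q0]: a reduction
   must therefore cope with every name of every point of the set. *)
Definition answer_at (q0 r0 : baire) : pfun1 := fun q r =>
  (q = q0 /\ r = r0) \/ (q <> q0 /\ names_nonempty q /\ r = cauchy_name (avoided_point q)).

Lemma answer_at_realizer q0 r0 y0 :
  avoids q0 y0 -> delta reals r0 y0 -> realizer C_R (answer_at q0 r0).
Proof.
  intros Hy0 Hr0. split.
  - intros q r1 r2 [[-> ->]|[Hn [_ ->]]] [[E ->]|[Hn2 [_ ->]]]; congruence.
  - intros q A HA [y Hy]. pose proof (delta_closedR_avoids _ _ HA) as HAq.
    destruct (classic (q = q0)) as [->|Hn].
    + exists r0. split; [left; auto|]. exists y0. split; auto. apply HAq; auto.
    + assert (Hne : names_nonempty q) by (exists y; apply HAq; auto).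
      exists (cauchy_name (avoided_point q)). split; [right; auto|].
      exists (avoided_point q). split; [apply cauchy_name_delta|].
      apply HAq, avoided_point_spec; auto.
Qed.

Definition bit_name (x : nat -> bool) : baire := fun n => if x n then 1%nat else 0%nat.

Lemma bit_name_delta x : delta cantor (bit_name x) x.
Proof. intro n; auto. Qed.

Lemma bit_name_agree x x' k : (forall n, (n < k)%nat -> x' n = x n) ->
  forall i, (i < k)%nat -> bit_name x' i = bit_name x i.
Proof. intros H i Hi; unfold bit_name; rewrite H; auto. Qed.

Lemma Rabs_le_bounds a b : Rabs a <= b -> - b <= a <= b.
Proof. unfold Rabs; destruct (Rcase_abs a); lra. Qed.

Section SortNotBelowC_R.
Variables (H : pfun2) (K : pfun1).
Hypotheses (fH : functional2 H) (cH : computable2 H) (fK : functional1 K) (cK : computable1 K)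
  (Hred : forall G, realizer C_R G ->
          realizer Sort (fun p r => exists q s, K p q /\ G q s /\ H p s r)).

Lemma outer_names_Sort x q y r : K (bit_name x) q -> avoids q y -> delta reals r y ->
  exists out z, H (bit_name x) r out /\ delta cantor out z /\ mval Sort x z.
Proof.
  intros HK Hy Hr. destruct (Hred _ (answer_at_realizer q r y Hy Hr)) as [_ Hreal].
  destruct (Hreal (bit_name x) x (bit_name_delta x) I)
    as [out [[q' [s [HK' [Hans HH]]]] [z [Hz HSort]]]].
  rewrite (fK _ _ _ HK' HK) in Hans.
  destruct Hans as [[_ ->]|[Hn _]]; [|congruence].
  exists out, z. auto.
Qed.

Lemma inner_names_nonempty x : exists q, K (bit_name x) q /\ names_nonempty q.
Proof.
  destruct (Hred _ (answer_at_realizer (fun _ => 0%nat) (cauchy_name 0) 0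
                     (avoids_empty_enum 0) (cauchy_name_delta 0))) as [_ Hreal].
  destruct (Hreal (bit_name x) x (bit_name_delta x) I) as [out [[q [s [HK [Hans _]]]] _]].
  exists q. split; auto.
  destruct Hans as [[-> _]|[_ [Hne _]]]; auto. exists 0. apply avoids_empty_enum.
Qed.

Definition forces_one (x : nat -> bool) (j m : nat) : Prop :=
  forall x', (forall n, (n < m)%nat -> x' n = x n) -> forall q', K (bit_name x') q' ->
  forall y, Rabs y <= INR j -> avoids q' y ->
  exists r out, delta reals r y /\ H (bit_name x') r out /\ out j = 1%nat.

Definition escapes (x : nat -> bool) (j m : nat) (x' : nat -> bool) (q' : baire) (y : R) : Prop :=
  (forall n, (n < m)%nat -> x' n = x n) /\ K (bit_name x') q' /\ Rabs y <= INR j /\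
  avoids q' y /\ forall r out, delta reals r y -> H (bit_name x') r out -> out j <> 1%nat.

Lemma escape_sequence x j : ~ (exists m, forces_one x j m) ->
  exists xs qs ys, forall m, escapes x j m (xs m) (qs m) (ys m).
Proof.
  intros Hno.
  assert (Hall : forall m, exists t : (nat -> bool) * baire * R,
             escapes x j m (fst (fst t)) (snd (fst t)) (snd t)).
  { intros m. apply NNPP; intro Hm. apply Hno. exists m. intros x' Ha q' HK y Hy Hav.
    apply NNPP; intro Hc. apply Hm. exists (x', q', y). repeat split; auto.
    intros r out Hr Hout E. apply Hc; eauto. }
  destruct (choice _ Hall) as [f Hf].
  exists (fun m => fst (fst (f m))), (fun m => snd (fst (f m))), (fun m => snd (f m)). exact Hf.
Qed.

Section EscapeCluster.
Variables (x : nat -> bool) (j : nat) (xs : nat -> nat -> bool) (qs : nat -> baire) (ys : nat -> R).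
Hypothesis Hesc : forall m, escapes x j m (xs m) (qs m) (ys m).
Variables (qx : baire) (l : R).
Hypotheses (HKx : K (bit_name x) qx) (Hl : ValAdh ys l).

Lemma escape_cluster_avoids : avoids qx l.
Proof.
  intros [n0 [c [Hq Hc]]].
  destruct (computable1_continuous K cK _ _ n0 HKx) as [k Hk].
  destruct (Hl _ k (in_interval_nbhd c l Hc)) as [p [Hpk Hpc]].
  destruct (Hesc p) as [Ha [HKp [_ [Hav _]]]].
  apply Hav. exists n0, c. split; auto. rewrite <- Hq. apply (Hk _ _ HKp).
  apply bit_name_agree. intros n Hn; apply Ha; lia.
Qed.

Lemma escape_cluster_not_avoids : exactly_n_zeros x j -> ~ avoids qx l.
Proof.
  intros Hx Hlx.
  destruct (outer_names_Sort x qx l (cauchy_name l) HKx Hlx (cauchy_name_delta l))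
    as [out [z [HH [Hz HSort]]]].
  assert (Hone : out j = 1%nat) by (rewrite (Hz j), (Sort_exactly _ _ _ Hx HSort); auto).
  destruct (computable2_continuous H cH _ _ _ j HH) as [k Hk].
  assert (Hp : 0 < (/2)^(S k)) by apply half_pow_pos.
  destruct (Hl (disc l (mkposreal _ Hp)) k) as [p [Hpk Hpl]].
  { exists (mkposreal _ Hp). intros y Hy; auto. }
  unfold disc in Hpl; change (pos (mkposreal _ Hp)) with ((/2)^(S k)) in Hpl.
  destruct (Hesc p) as [Ha [HKp [_ [Hav Hnot]]]].
  set (r := splice (cauchy_name l) (cauchy_name (ys p)) k).
  assert (Hr : delta reals r (ys p)) by (apply splice_delta; lra).
  destruct (outer_names_Sort (xs p) (qs p) (ys p) r HKp Hav Hr) as [out' [z' [HH' _]]].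
  apply (Hnot _ out' Hr HH'). rewrite <- Hone. apply (Hk _ _ _ HH').
  - apply bit_name_agree. intros n Hn; apply Ha; lia.
  - intros i Hi. unfold r, splice. destruct (Nat.ltb_spec i k); auto; lia.
Qed.

End EscapeCluster.

Lemma forces_one_exists x j : exactly_n_zeros x j -> exists m, forces_one x j m.
Proof.
  intros Hx. apply NNPP; intro Hno.
  destruct (escape_sequence x j Hno) as [xs [qs [ys Hesc]]].
  destruct (Bolzano_Weierstrass ys (fun c => - INR j <= c <= INR j) (compact_P3 _ _)) as [l Hl].
  { intros m. destruct (Hesc m) as [_ [_ [Hb _]]]. apply Rabs_le_bounds; auto. }
  destruct (inner_names_nonempty x) as [qx [HKx _]].
  exact (escape_cluster_not_avoids x j xs qs ys Hesc qx l HKx Hl Hx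
           (escape_cluster_avoids x j xs qs ys Hesc qx l HKx Hl)).
Qed.

Definition modulus (x : nat -> bool) (j : nat) : nat :=
  match excluded_middle_informative (exists m, forces_one x j m) with
  | left h => proj1_sig (constructive_indefinite_description _ h)
  | right _ => 0%nat
  end.

Lemma modulus_spec x j : exactly_n_zeros x j -> forces_one x j (modulus x j).
Proof.
  intros Hx. unfold modulus. destruct (excluded_middle_informative _) as [h|h].
  - destruct (constructive_indefinite_description _ h); auto.
  - exfalso; apply h, forces_one_exists; auto.
Qed.

Definition zeros_before (x : nat -> bool) (j N : nat) : Prop :=
  (forall n, (N <= n)%nat -> x n = true) /\ zeros_upto x N = j.

Definition zeros_bound (x : nat -> bool) (j : nat) : nat :=
  match excluded_middle_informative (exists N, zeros_before x j N) with
  | left h => proj1_sig (constructive_indefinite_description _ h)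
  | right _ => 0%nat
  end.

Lemma zeros_bound_spec x j : (exists N, zeros_before x j N) -> zeros_before x j (zeros_bound x j).
Proof.
  intros h0. unfold zeros_bound. destruct (excluded_middle_informative _) as [h|]; [|contradiction].
  destruct (constructive_indefinite_description _ h); auto.
Qed.

(* The new zero is placed beyond the modulus of [zeros_seq j] at [j], so that all
   later sequences, and their limit, still force a [1] at position [j]. *)
Fixpoint zeros_seq (j : nat) : nat -> bool :=
  match j with
  | 0%nat => fun _ => true
  | S j' => let M := (modulus (zeros_seq j') j' + zeros_bound (zeros_seq j') j')%nat in
            fun n => if Nat.ltb n M then zeros_seq j' n else negb (Nat.eqb n M)
  end.

Definition zero_pos (j : nat) : nat :=
  (modulus (zeros_seq j) j + zeros_bound (zeros_seq j) j)%nat.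

Lemma zeros_seq_S j n :
  zeros_seq (S j) n = if Nat.ltb n (zero_pos j) then zeros_seq j n else negb (Nat.eqb n (zero_pos j)).
Proof. reflexivity. Qed.

Lemma zeros_seq_zeros_before j : exists N, zeros_before (zeros_seq j) j N.
Proof.
  induction j as [|j IH].
  - exists 0%nat. split; auto.
  - destruct (zeros_bound_spec _ _ IH) as [Hones Hcount].
    assert (HM : (zeros_bound (zeros_seq j) j <= zero_pos j)%nat) by (unfold zero_pos; lia).
    exists (S (zero_pos j)). split.
    + intros n Hn. rewrite zeros_seq_S.
      destruct (Nat.ltb_spec n (zero_pos j)); [lia|].
      destruct (Nat.eqb_spec n (zero_pos j)); [lia|auto].
    + change (zeros_upto (zeros_seq (S j)) (S (zero_pos j))) with
        (zeros_upto (zeros_seq (S j)) (zero_pos j)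
         + (if zeros_seq (S j) (zero_pos j) then 0 else 1))%nat.
      rewrite zeros_seq_S, Nat.ltb_irrefl, Nat.eqb_refl. simpl negb.
      rewrite (zeros_upto_ext _ (zeros_seq j)).
      2:{ intros n Hn. rewrite zeros_seq_S. destruct (Nat.ltb_spec n (zero_pos j)); auto; lia. }
      rewrite (zeros_upto_ones_tail _ _ Hones _ HM), Hcount. lia.
Qed.

Lemma zeros_seq_exactly j : exactly_n_zeros (zeros_seq j) j.
Proof.
  destruct (zeros_seq_zeros_before j) as [N [Hones Hcount]].
  rewrite <- Hcount at 2. apply exactly_n_zeros_of_ones_tail; auto.
Qed.

Lemma zero_pos_lt j : (zero_pos j < zero_pos (S j))%nat.
Proof.
  destruct (zeros_bound_spec _ _ (zeros_seq_zeros_before (S j))) as [Hones _].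
  unfold zero_pos at 2.
  destruct (le_lt_dec (zeros_bound (zeros_seq (S j)) (S j)) (zero_pos j)) as [Hle|]; [|lia].
  specialize (Hones _ Hle). rewrite zeros_seq_S, Nat.ltb_irrefl, Nat.eqb_refl in Hones.
  discriminate.
Qed.

Lemma zero_pos_mono j j' : (j <= j')%nat -> (zero_pos j <= zero_pos j')%nat.
Proof.
  induction 1 as [|j' _ IH]; auto. pose proof (zero_pos_lt j'); lia.
Qed.

Lemma zero_pos_ge j : (j <= zero_pos j)%nat.
Proof. induction j; [lia|]. pose proof (zero_pos_lt j); lia. Qed.

Lemma zeros_seq_stable j j' n : (j <= j')%nat -> (n < zero_pos j)%nat ->
  zeros_seq j' n = zeros_seq j n.
Proof.
  induction 1 as [|j' Hjj' IH]; intros Hn; auto.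
  rewrite zeros_seq_S. pose proof (zero_pos_mono _ _ Hjj').
  destruct (Nat.ltb_spec n (zero_pos j')); auto; lia.
Qed.

Definition zeros_limit : nat -> bool := fun n => zeros_seq (S n) n.

Lemma zeros_limit_agree j n : (n < zero_pos j)%nat -> zeros_limit n = zeros_seq j n.
Proof.
  intros Hn. unfold zeros_limit. destruct (le_lt_dec (S n) j).
  - symmetry. apply zeros_seq_stable; auto. pose proof (zero_pos_ge (S n)); lia.
  - apply zeros_seq_stable; auto; lia.
Qed.

Lemma zeros_limit_inf : inf_many_zeros zeros_limit.
Proof.
  intros N. exists (zero_pos N). split; [apply zero_pos_ge|].
  rewrite (zeros_limit_agree (S N)) by apply zero_pos_lt.
  rewrite zeros_seq_S, Nat.ltb_irrefl, Nat.eqb_refl. auto.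
Qed.

Lemma reduction_contradiction : False.
Proof.
  destruct (inner_names_nonempty zeros_limit) as [q [HK [y Hy]]].
  set (j := Z.to_nat (up (Rabs y))).
  assert (Hj : Rabs y <= INR j).
  { unfold j. destruct (archimed (Rabs y)) as [A1 A2]. pose proof (Rabs_pos y).
    rewrite INR_IZR_INZ, Z2Nat.id; [lra|]. apply le_IZR. lra. }
  destruct (modulus_spec _ _ (zeros_seq_exactly j) zeros_limit) with (q' := q) (y := y)
    as [r [out [Hr [HH Hone]]]]; auto.
  { intros n Hn. apply zeros_limit_agree. unfold zero_pos. lia. }
  destruct (outer_names_Sort zeros_limit q y r HK Hy Hr) as [out' [z [HH' [Hz HSort]]]].
  rewrite (fH _ _ _ _ HH' HH) in Hz.
  rewrite Hz, (Sort_inf _ j _ zeros_limit_inf HSort) in Hone. discriminate.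
Qed.

End SortNotBelowC_R.

Lemma not_Sort_le_C_R : ~ weihrauch_le Sort C_R.
Proof.
  intros [H [K [fH [cH [fK [cK Hred]]]]]]. exact (reduction_contradiction H K fH cH fK cK Hred).
Qed.

Theorem proposition3p5 :
  ~ weihrauch_le Sort C_R /\ ~ weihrauch_le C_R Sort.
Proof. split; [exact not_Sort_le_C_R | exact not_C_R_le_Sort]. Qed.
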